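(* Let $\mathbb F$ be a field and $A=[a_{ij}],C=[c_{ij}]\in M_n(\mathbb F)$. Then $C=DAD^{-1}$ for some invertible diagonal matrix $D$ if and only if both of the following hold: (1) $a_{ij}\neq0$ if and only if $c_{ij}\neq0$, for all $i,j\in[n]$; (2) for every sequence $(i_1,\dots,i_p)$ ($p\ge1$) of distinct elements of $[n]$ such that, setting $i_{p+1}:=i_1$, at least one of $a_{i_ki_{k+1}}$ and $a_{i_{k+1}i_k}$ is nonzero for each $k\in[p]$, we have $$f_{i_1i_2}(A)\cdots f_{i_{p-1}i_p}(A)f_{i_pi_1}(A)=f_{i_1i_2}(C)\cdots f_{i_{p-1}i_p}(C)f_{i_pi_1}(C).$$
   Context: $[n]=\{1,\dots,n\}$. For $X=[x_{ij}]\in M_n(\mathbb F)$ and $i,j\in[n]$ define $f_{ij}(X)=x_{ij}$ if $x_{ij}\neq0$; $f_{ij}(X)=1/x_{ji}$ if $x_{ij}=0$ and $x_{ji}\ne0$; and $f_{ij}(X)=0$ if $x_{ij}=x_{ji}=0$. *)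

From HB Require Import structures.
From mathcomp Require Import all_boot all_order all_algebra.
Set Implicit Arguments. Unset Strict Implicit. Unset Printing Implicit Defensive.
Import GRing.Theory.
Local Open Scope ring_scope.

Definition fij (F : fieldType) (n : nat) (X : 'M[F]_n) (i j : 'I_n) : F :=
  if X i j != 0 then X i j
  else if X j i != 0 then (X j i)^-1
  else 0.

(* the k-th element of the cyclic sequence s (indices taken mod size s),
   so that i_{p+1} = i_1 *)
Definition cyc_nth (n : nat) (s : seq 'I_n) (i0 : 'I_n) (k : nat) : 'I_n :=
  nth i0 s (k %% size s).

Definition admissible_cycle (F : fieldType) (n : nat) (A : 'M[F]_n)
    (s : seq 'I_n) : Prop :=
  (0 < size s)%N /\ uniq s /\
  forall (i0 : 'I_n) (k : nat), (k < size s)%N ->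
    A (cyc_nth s i0 k) (cyc_nth s i0 k.+1) != 0 \/
    A (cyc_nth s i0 k.+1) (cyc_nth s i0 k) != 0.

Definition cycle_prod (F : fieldType) (n : nat) (X : 'M[F]_n)
    (s : seq 'I_n) (i0 : 'I_n) : F :=
  \prod_(k < size s) fij X (cyc_nth s i0 k) (cyc_nth s i0 k.+1).

From HB Require Import structures.
From mathcomp Require Import all_boot all_order all_algebra.
From mathcomp Require Import ring.

Set Implicit Arguments.
Unset Strict Implicit.
Unset Printing Implicit Defensive.

Import GRing.Theory.
Local Open Scope ring_scope.

(* A diagonal similarity [C = D A D^-1] multiplies [f_ij] by [d_i / d_j], so
   the product of the [f]'s along any closed walk of the graph of [A] is
   invariant.  Conversely, a closed walk that revisits a vertex splits into
   two shorter closed walks, so the hypothesis on simple cycles extends to all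
   closed walks.  On each connected component the ratio of the [A]- and
   [C]-products along a walk from a fixed root to [j] then depends only on
   [j]; these ratios are the diagonal of [D]. *)

Lemma nuniq_loop_split (T : eqType) (x : T) (s : seq T) :
  ~~ uniq (x :: s) ->
  exists p1 p2 p3, [/\ s = p1 ++ p2 ++ p3, p2 != [::] &
                       last x (p1 ++ p2) = last x p1].
Proof.
elim: s x => [//|y s IHs] x; rewrite cons_uniq negb_and negbK.
case/orP => [x_in|nuniq_ys].
  case/path.splitP: x_in => s1 s2.
  by exists [::], (rcons s1 x), s2; split; rewrite ?last_rcons //; case: s1.
have [p1 [p2 [p3 [-> p2_nil last_p12]]]] := IHs y nuniq_ys.
by exists (y :: p1), p2, p3.
Qed.

Section WalkProduct.
Variables (F : fieldType) (n : nat).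
Implicit Types (X Y : 'M[F]_n) (x y : 'I_n) (p q : seq 'I_n).

Definition mx_edge X : rel 'I_n := fun i j => (X i j != 0) || (X j i != 0).

Lemma mx_edge_connect_sym X : connect_sym (mx_edge X).
Proof. by apply: sym_connect_sym => i j; rewrite /mx_edge orbC. Qed.

Lemma eq_mx_edge X Y :
  (forall i j, X i j != 0 <-> Y i j != 0) -> mx_edge X =2 mx_edge Y.
Proof.
move=> suppXY i j; rewrite /mx_edge.
by congr orb; apply/idP/idP => /suppXY.
Qed.

Lemma fij_neq0 X i j : mx_edge X i j -> fij X i j != 0.
Proof.
rewrite /fij /mx_edge; case: ifP => //= _.
by case: ifP => //= Xji _; rewrite invr_eq0 Xji.
Qed.

Fixpoint walk_prod X x p : F :=
  if p is y :: p' then fij X x y * walk_prod X y p' else 1.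

Lemma walk_prod_cat X x p q :
  walk_prod X x (p ++ q) = walk_prod X x p * walk_prod X (last x p) q.
Proof. by elim: p x => [|y p IHp] x /=; rewrite ?mul1r ?IHp ?mulrA. Qed.

Lemma walk_prod_rcons X x p y :
  walk_prod X x (rcons p y) = walk_prod X x p * fij X (last x p) y.
Proof. by rewrite -cats1 walk_prod_cat /= mulr1. Qed.

Lemma walk_prod_loop X x p1 p2 q :
  last x (p1 ++ p2) = last x p1 ->
  walk_prod X x (p1 ++ p2 ++ q) = walk_prod X (last x p1) p2 * walk_prod X x (p1 ++ q).
Proof.
rewrite last_cat => loop.
by rewrite !walk_prod_cat loop mulrCA.
Qed.

Lemma walk_prod_neq0 X x p : path (mx_edge X) x p -> walk_prod X x p != 0.
Proof.
elim: p x => [|y p IHp] x /=; first by rewrite oner_neq0.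
by case/andP => edge_xy path_p; rewrite mulf_neq0 ?fij_neq0 ?IHp.
Qed.

Lemma walk_prodE X x p i0 :
  walk_prod X x p = \prod_(k < size p) fij X (nth i0 (x :: p) k) (nth i0 p k).
Proof.
elim: p x => [|y p IHp] x /=; first by rewrite big_ord0.
by rewrite big_ord_recl IHp.
Qed.

Lemma cyc_nth_rcons x t i0 k : (k <= (size t).+1)%N ->
  cyc_nth (x :: t) i0 k = nth i0 (x :: rcons t x) k.
Proof.
rewrite /cyc_nth /= leq_eqVlt ltnS => /orP [/eqP ->|lt_k].
  by rewrite modnn /= nth_rcons ltnn eqxx.
rewrite modn_small ?ltnS //.
by case: k lt_k => //= k lt_k; rewrite nth_rcons lt_k.
Qed.

Lemma cycle_prodE X x t i0 :
  cycle_prod X (x :: t) i0 = walk_prod X x (rcons t x).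
Proof.
rewrite (walk_prodE _ _ _ i0) /cycle_prod size_rcons.
by apply: eq_bigr => k _; rewrite !cyc_nth_rcons ?(ltnW (ltn_ord k)).
Qed.

Lemma cycle_admissible X x t :
  uniq (x :: t) -> path (mx_edge X) x (rcons t x) -> admissible_cycle X (x :: t).
Proof.
move=> uniq_xt path_xt; split=> //; split=> // i0 k lt_k.
rewrite !cyc_nth_rcons ?(ltnW lt_k) //.
by move/(pathP i0): path_xt => /(_ k); rewrite size_rcons => /(_ lt_k) /orP.
Qed.

End WalkProduct.

Section DiagonalSimilarity.
Variables (F : fieldType) (n : nat) (A C : 'M[F]_n) (d : 'I_n -> F).
Hypothesis d_neq0 : forall i, d i != 0.
Hypothesis CE : forall i j, C i j = d i * A i j / d j.

Lemma diag_conj_neq0 i j : (C i j != 0) = (A i j != 0).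
Proof. by rewrite CE !mulf_eq0 invr_eq0 (negbTE (d_neq0 i)) (negbTE (d_neq0 j)) orbF. Qed.

Lemma fij_diag_conj i j : fij C i j = d i / d j * fij A i j.
Proof.
have := d_neq0 i; have := d_neq0 j.
rewrite /fij !diag_conj_neq0 CE; case: ifP => _ dj di; first by field.
by case: ifP => Aji; [rewrite CE; field; rewrite Aji dj di | rewrite mulr0].
Qed.

Lemma walk_prod_diag_conj x p :
  walk_prod C x p = d x / d (last x p) * walk_prod A x p.
Proof.
elim: p x => [|y p IHp] x /=; first by rewrite divff ?mulr1.
by rewrite IHp fij_diag_conj; field; rewrite ?d_neq0.
Qed.

Lemma cycle_prod_diag_conj s i0 : cycle_prod C s i0 = cycle_prod A s i0.
Proof.
case: s => [|x t]; first by rewrite /cycle_prod !big_ord0.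
by rewrite !cycle_prodE walk_prod_diag_conj last_rcons divff ?mul1r.
Qed.

End DiagonalSimilarity.

Lemma invmx_diag (F : fieldType) (n : nat) (d : 'rV[F]_n) :
  (forall i, d 0 i != 0) -> invmx (diag_mx d) = diag_mx (\row_j (d 0 j)^-1).
Proof.
move=> d_neq0.
have diag_inv : diag_mx d *m diag_mx (\row_j (d 0 j)^-1) = 1%:M.
  rewrite mulmx_diag -diag_const_mx; congr diag_mx.
  by apply/rowP => j; rewrite !mxE divff.
have [d_unit _] := mulmx1_unit diag_inv.
by rewrite -[invmx _]mulmx1 -diag_inv mulKmx.
Qed.

Lemma diag_conjE (F : fieldType) (n : nat) (d : 'rV[F]_n) (A : 'M[F]_n) :
  (forall i, d 0 i != 0) ->
  forall i j, (diag_mx d *m A *m invmx (diag_mx d)) i j = d 0 i * A i j / d 0 j.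
Proof. by move=> d_neq0 i j; rewrite invmx_diag // mul_mx_diag mul_diag_mx !mxE. Qed.

Section CycleCondition.
Variables (F : fieldType) (n : nat) (A C : 'M[F]_n).

Local Notation e := (mx_edge A).
Local Notation root := (fingraph.root e).

Lemma root_walk_exists j : exists p, path e (root j) p && (last (root j) p == j).
Proof.
have: connect e (root j) j.
  by rewrite (@mx_edge_connect_sym _ _ A) connect_root.
by case/connectP=> p path_p last_p; exists p; rewrite path_p -last_p eqxx.
Qed.

Definition root_walk j := xchoose (root_walk_exists j).

Lemma root_walkP j : path e (root j) (root_walk j) /\ last (root j) (root_walk j) = j.
Proof. by have /andP [-> /eqP ->] := xchooseP (root_walk_exists j). Qed.

Definition conj_factor j :=
  walk_prod A (root j) (root_walk j) / walk_prod C (root j) (root_walk j).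

Hypothesis suppAC : forall i j, A i j != 0 <-> C i j != 0.

Lemma walk_prodC_neq0 x p : path e x p -> walk_prod C x p != 0.
Proof. by rewrite (eq_path (eq_mx_edge suppAC)); apply: walk_prod_neq0. Qed.

Lemma conj_factor_neq0 j : conj_factor j != 0.
Proof.
have [path_j _] := root_walkP j.
by rewrite /conj_factor mulf_neq0 ?invr_eq0 ?walk_prodC_neq0 ?walk_prod_neq0.
Qed.

Hypothesis cycleAC : forall s i0, admissible_cycle A s ->
  cycle_prod A s i0 = cycle_prod C s i0.

Lemma closed_walk_prod_eq x p :
  path e x p -> last x p = x -> walk_prod A x p = walk_prod C x p.
Proof.
have [m] := ubnP (size p); elim: m x p => // m IHm x p.
case/lastP: p => [//|t y]; rewrite size_rcons ltnS last_rcons => lt_tm path_p y_x.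
subst y.
have [uniq_xt|] := boolP (uniq (x :: t)).
  by rewrite -!(cycle_prodE _ _ _ x); apply/cycleAC/cycle_admissible.
case/nuniq_loop_split => p1 [p2 [p3 [t_E p2_nil loop]]].
have p_E : rcons t x = p1 ++ p2 ++ rcons p3 x by rewrite t_E !rcons_cat.
move: path_p; rewrite p_E !cat_path -last_cat loop => /and3P [path_p1 path_p2 path_p3].
rewrite !walk_prod_loop // (IHm (last x p1) p2) ?(IHm x (p1 ++ rcons p3 x)) //.
- apply: leq_ltn_trans lt_tm.
  by rewrite t_E !size_cat size_rcons leq_add2l -add1n leq_add2r lt0n size_eq0.
- by rewrite cat_path path_p1.
- by rewrite last_cat last_rcons.
- by apply: leq_ltn_trans lt_tm; rewrite t_E !size_cat addnCA leq_addr.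
- by move: loop; rewrite last_cat.
Qed.

Lemma walk_prod_ratio_eq x p q :
  path e x p -> path e x q -> last x p = last x q ->
  walk_prod A x p / walk_prod C x p = walk_prod A x q / walk_prod C x q.
Proof.
move=> path_p path_q last_pq; set y := last x p.
have: connect e y x.
  by rewrite (@mx_edge_connect_sym _ _ A); apply/connectP; exists p.
case/connectP=> r path_r r_x.
have ratio s : path e x s -> last x s = y ->
    walk_prod A x s / walk_prod C x s = walk_prod C y r / walk_prod A y r.
  move=> path_s last_s.
  have path_sr : path e x (s ++ r) by rewrite cat_path path_s last_s.
  have := closed_walk_prod_eq path_sr; rewrite last_cat last_s -r_x => /(_ erefl).
  rewrite !walk_prod_cat last_s => sr_eq.
  apply/eqP; rewrite eqr_div ?walk_prodC_neq0 ?walk_prod_neq0 //.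
  by rewrite sr_eq mulrC.
by rewrite (ratio p) // (ratio q) // -last_pq.
Qed.

Lemma conj_factorE i j : C i j = conj_factor i * A i j / conj_factor j.
Proof.
have [Aij|Aij] := eqVneq (A i j) 0.
  rewrite Aij mulr0 mul0r; apply/eqP/contraT => /suppAC.
  by rewrite Aij eqxx.
have Cij : C i j != 0 by apply/suppAC.
have edge_ij : e i j by rewrite /mx_edge Aij.
have root_ij : root i = root j.
  by apply/(fingraph.rootP (@mx_edge_connect_sym _ _ A))/connect1.
have [path_i last_i] := root_walkP i; have [path_j last_j] := root_walkP j.
rewrite root_ij in path_i last_i.
have := @walk_prod_ratio_eq (root j) (rcons (root_walk i) j) (root_walk j).
rewrite rcons_path path_i last_i edge_ij last_rcons last_j => /(_ isT path_j erefl).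
rewrite !walk_prod_rcons last_i /fij Aij Cij /conj_factor root_ij => <-.
by field; rewrite Cij Aij walk_prodC_neq0 ?walk_prod_neq0.
Qed.

End CycleCondition.

Theorem theorem2p9 (F : fieldType) (n : nat) (A C : 'M[F]_n) :
  (exists d : 'rV[F]_n, (forall i, d 0 i != 0) /\
     C = diag_mx d *m A *m invmx (diag_mx d))
  <->
  ((forall i j : 'I_n, A i j != 0 <-> C i j != 0) /\
   (forall (s : seq 'I_n) (i0 : 'I_n), admissible_cycle A s ->
      cycle_prod A s i0 = cycle_prod C s i0)).
Proof.
split=> [[d [d_neq0 ->]]|[suppAC cycleAC]].
  have CE := diag_conjE A d_neq0.
  split=> [i j|s i0 _]; first by rewrite (diag_conj_neq0 d_neq0 CE).
  by rewrite (cycle_prod_diag_conj d_neq0 CE).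
exists (\row_j conj_factor A C j).
have d_neq0 i : (\row_j conj_factor A C j) 0 i != 0.
  by rewrite mxE conj_factor_neq0.
split=> //; apply/matrixP=> i j.
by rewrite diag_conjE // !mxE -conj_factorE.
Qed.
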